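(* There exists a data structure for the dynamic variant of Disjoint Factors with $k=2$ that supports updates and queries in amortized time $\mathcal{O}(1)$.
   Context: Disjoint Factors with $k=2$: given $w\in\{1,2\}^\star$, decide whether there exist disjoint (contiguous) subwords $w_1,w_2$ of $w$, each of length at least $2$, with $w_i$ beginning and ending with symbol $i$. Dynamic variant: a data structure maintaining $w$ under updates replacing single symbols and answering whether the current word is a yes-instance. Word-RAM model. *)

From mathcomp Require Import all_boot.
From Stdlib Require Import PeanoNat.

Set Implicit Arguments.
Unset Strict Implicit.
Unset Printing Implicit Defensive.

Definition is_symbol (a : nat) : bool := (a == 1) || (a == 2).

Definition word12 (w : seq nat) : bool := all is_symbol w.

Definition factor_of (w : seq nat) (s i j : nat) : Prop :=
  [/\ i < j, j < size w, nth 0 w i = s & nth 0 w j = s].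

Definition disjoint_factors2 (w : seq nat) : Prop :=
  exists i1 j1 i2 j2,
    [/\ factor_of w 1 i1 j1, factor_of w 2 i2 j2 & (j1 < i2) || (j2 < i1)].

(* Word-RAM model.  Word size [ws]: every register / memory cell holds a     *)
(* value < 2^ws; arithmetic is modulo 2^ws.  Unit cost per instruction.      *)

Inductive binop :=
  | OAdd | OSub | OMul | ODiv | OMod | OAnd | OOr | OXor | OShl | OShr
  | OLt | OEq.

Inductive instr :=
  | IConst of nat & nat          (* IConst d k   : r_d := k mod 2^ws      *)
  | IBin of binop & nat & nat & nat (* IBin o d a b : r_d := o(r_a, r_b)  *)
  | ILoad of nat & nat           (* ILoad d a    : r_d := M[r_a]          *)
  | IStore of nat & nat          (* IStore a s   : M[r_a] := r_s          *)
  | IJz of nat & nat             (* IJz c t      : if r_c = 0 goto t      *)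
  | IJmp of nat                  (* IJmp t       : goto t                 *)
  | IHalt.

Definition program := seq instr.

Record conf := Conf { pc : nat; regs : nat -> nat; mem : nat -> nat }.

Definition wmod (ws x : nat) : nat := x %% 2 ^ ws.

Definition eval_binop (ws : nat) (o : binop) (x y : nat) : nat :=
  wmod ws match o with
  | OAdd => x + y
  | OSub => x + 2 ^ ws - y
  | OMul => x * y
  | ODiv => x %/ y
  | OMod => x %% y
  | OAnd => Nat.land x y
  | OOr => Nat.lor x y
  | OXor => Nat.lxor x y
  | OShl => x * 2 ^ y
  | OShr => x %/ 2 ^ y
  | OLt => x < y
  | OEq => x == y
  end.

Definition upd (f : nat -> nat) (k v : nat) : nat -> nat :=
  fun x => if x == k then v else f x.

(* one step; [None] when the machine has halted (IHalt or pc out of range) *)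
Definition step (ws : nat) (p : program) (s : conf) : option conf :=
  let r := regs s in
  let m := mem s in
  let n := (pc s).+1 in
  match nth IHalt p (pc s) with
  | IConst d k => Some (Conf n (upd r d (wmod ws k)) m)
  | IBin o d a b => Some (Conf n (upd r d (eval_binop ws o (r a) (r b))) m)
  | ILoad d a => Some (Conf n (upd r d (m (r a))) m)
  | IStore a x => Some (Conf n r (upd m (r a) (r x)))
  | IJz c t => Some (Conf (if r c == 0 then t else n) r m)
  | IJmp t => Some (Conf t r m)
  | IHalt => None
  end.

Fixpoint exec (ws : nat) (p : program) (fuel : nat) (s : conf)
  : option (nat * conf) :=
  match fuel with
  | 0 => None
  | f.+1 =>
      match step ws p s with
      | None => Some (0, s)
      | Some s' =>
          match exec ws p f s' with
          | Some (t, s'') => Some (t.+1, s'')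
          | None => None
          end
      end
  end.

Definition halts (ws : nat) (p : program) (s : conf) (t : nat) (s' : conf)
  : Prop :=
  exists fuel, exec ws p fuel (Conf 0 (regs s) (mem s)) = Some (t, s').

(*  - init: started with all registers 0 except r1 = n, and memory holding   *)
(*    the initial word w in cells 0..n-1 (all other cells 0);                *)
(*  - update(i,a): started with r1 = i, r2 = a (other registers and memory   *)
(*    as left by the previous operation); sets w_i := a;                     *)
(*  - query: started with registers/memory as left by the previous           *)
(*    operation; must halt with r0 <> 0 iff the current word is a            *)
(*    yes-instance.                                                          *)

Record dyn_ds := DynDS { ds_init : program; ds_update : program;
                         ds_query : program }.

Inductive operation := OpUpdate of nat & nat | OpQuery.

Definition valid_op (n : nat) (o : operation) : bool :=
  match o with
  | OpUpdate i a => (i < n) && is_symbol a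
  | OpQuery => true
  end.

Definition init_conf (w : seq nat) : conf :=
  Conf 0 (upd (fun _ => 0) 1 (size w)) (fun x => nth 0 w x).

Fixpoint serves (ws : nat) (D : dyn_ds) (ops : seq operation)
    (cur : seq nat) (s : conf) (budget : nat) : Prop :=
  match ops with
  | [::] => True
  | OpUpdate i a :: ops' =>
      exists t s',
        [/\ halts ws (ds_update D) (Conf 0 (upd (upd (regs s) 1 i) 2 a) (mem s))
              t s',
            t <= budget &
            serves ws D ops' (set_nth 0 cur i a) s' (budget - t)]
  | OpQuery :: ops' =>
      exists t s',
        [/\ halts ws (ds_query D) s t s',
            t <= budget,
            (regs s' 0 != 0 <-> disjoint_factors2 cur) &
            serves ws D ops' cur s' (budget - t)]
  end.

Definition runs_within (ws : nat) (D : dyn_ds) (w : seq nat)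
    (ops : seq operation) (budget : nat) : Prop :=
  exists t s,
    [/\ halts ws (ds_init D) (init_conf w) t s,
        t <= budget &
        serves ws D ops w s (budget - t)].

(* Cutting a word between its two factors shows that a word over
   {1,2} with a ones and b twos is a yes-instance iff a, b >= 3, or a = 2 and
   the word begins or ends with 22, or b = 2 and it begins or ends with 11:
   with three letters of each kind the prefix of length 3 holds two equal
   letters and the suffix after it two of the other kind, while a letter
   occurring exactly twice forces its factor to span both occurrences, so the
   other factor lies before or after it and may be shrunk to a border pair.
   The data structure thus keeps only n and a: an update adjusts a, a query
   reads the four border letters, and initialisation counts the ones in O(n). *)

From mathcomp Require Import all_boot zify.

Set Implicit Arguments.
Unset Strict Implicit.
Unset Printing Implicit Defensive.

Lemma count_mem_take_drop (w : seq nat) x k :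
  count_mem x (take k w) + count_mem x (drop k w) = count_mem x w.
Proof. by rewrite -count_cat cat_take_drop. Qed.

Lemma count_mem_take_mono (w : seq nat) x k m :
  k <= m -> count_mem x (take k w) <= count_mem x (take m w).
Proof.
by move=> le_km; rewrite -(take_takel w le_km) leq_count_subseq ?take_subseq.
Qed.

Lemma count_mem_drop_anti (w : seq nat) x k m :
  k <= m -> count_mem x (drop m w) <= count_mem x (drop k w).
Proof.
by move=> le_km; rewrite -(subnK le_km) -drop_drop leq_count_subseq ?drop_subseq.
Qed.

Lemma count_mem_two_letters (u : seq nat) s t :
  s != t -> all (fun x => (x == s) || (x == t)) u ->
  count_mem s u + count_mem t u = size u.
Proof.
move=> neq_st; elim: u => //= x u IHu /andP[/orP[] /eqP-> /IHu <-].
  by rewrite eqxx (negbTE neq_st); lia.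
by rewrite eqxx eq_sym (negbTE neq_st); lia.
Qed.

Lemma all_set_nth (T : Type) (a : pred T) x0 (u : seq T) i y :
  i < size u -> a y -> all a u -> all a (set_nth x0 u i y).
Proof.
move=> lt_iu ay; rewrite -{1}(cat_take_drop i u) (drop_nth x0 lt_iu) set_nthE lt_iu.
by rewrite !all_cat /= ay => /andP[-> /andP[_ ->]].
Qed.

Lemma count_mem_gt1P (u : seq nat) s :
  (exists i j, factor_of u s i j) <-> 1 < count_mem s u.
Proof.
split=> [[i [j [lt_ij lt_ju ui uj]]] | ].
  have lt_iu : i < size u by apply: ltn_trans lt_ju.
  rewrite -(cat_take_drop i.+1 u) count_cat.
  have in_take : s \in take i.+1 u.
    by rewrite -ui -(nth_take 0 (ltnSn i)) mem_nth // size_takel.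
  have in_drop : s \in drop i.+1 u.
    have lt_jd : j - i.+1 < size (drop i.+1 u) by rewrite size_drop; lia.
    by rewrite -uj -(subnKC lt_ij) -nth_drop mem_nth.
  by apply: (@leq_add 1 1); rewrite -has_count has_pred1.
elim: u => //= x u IHu.
case: (eqVneq x s) => [-> | _] /= cnt.
  rewrite add1n ltnS in cnt.
  have lt_iu : index s u < size u by rewrite index_mem -has_pred1 has_count.
  by exists 0, (index s u).+1; split; rewrite //= nth_index // -index_mem.
by have [i [j [? ? ? ?]]] := IHu cnt; exists i.+1, j.+1.
Qed.

Lemma factor_of_take (w : seq nat) s i j k :
  j < k -> factor_of (take k w) s i j <-> factor_of w s i j.
Proof.
move=> lt_jk; rewrite /factor_of size_take_min.
split=> -[lt_ij lt_jw wi wj]; have lt_ik : i < k by lia.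
  by move: wi wj; rewrite !nth_take //; split=> //; lia.
by rewrite !nth_take //; split=> //; lia.
Qed.

Lemma factor_of_drop (w : seq nat) s i j k :
  factor_of (drop k w) s i j <-> factor_of w s (k + i) (k + j).
Proof.
rewrite /factor_of size_drop !nth_drop.
by split=> -[? ? ? ?]; split=> //; lia.
Qed.

Definition splits_at (w : seq nat) (s t k : nat) : bool :=
  (1 < count_mem s (take k w)) && (1 < count_mem t (drop k w)).

Lemma separated_factorsP (w : seq nat) s t :
  (exists i1 j1 i2 j2, [/\ factor_of w s i1 j1, factor_of w t i2 j2 & j1 < i2])
  <-> exists k, splits_at w s t k.
Proof.
split=> [[i1 [j1 [i2 [j2 [f1 f2 lt12]]]]] | [k /andP[]]].
  exists j1.+1; apply/andP; split; apply/count_mem_gt1P.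
    by exists i1, j1; apply/factor_of_take.
  exists (i2 - j1.+1), (j2 - j1.+1); apply/factor_of_drop.
  by rewrite !subnKC //; case: f2 => *; lia.
move=> /count_mem_gt1P[i1 [j1 f1]] /count_mem_gt1P[i2 [j2 /factor_of_drop f2]].
have lt_j1k : j1 < k by case: f1 => _; rewrite size_take_min; lia.
move/(factor_of_take _ _ _ lt_j1k) in f1.
by exists i1, j1, (k + i2), (k + j2); split=> //; lia.
Qed.

Lemma disjoint_factors2_splitP (w : seq nat) :
  disjoint_factors2 w <->
  (exists k, splits_at w 1 2 k) \/ (exists k, splits_at w 2 1 k).
Proof.
rewrite -!separated_factorsP; split.
  move=> [i1 [j1 [i2 [j2 [f1 f2 /orP[] lt]]]]].
    by left; exists i1, j1, i2, j2.
  by right; exists i2, j2, i1, j1.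
case=> [[i1 [j1 [i2 [j2 [f1 f2 lt]]]]] | [i2 [j2 [i1 [j1 [f2 f1 lt]]]]]].
  by exists i1, j1, i2, j2; rewrite lt.
by exists i1, j1, i2, j2; rewrite lt orbT.
Qed.

Definition border_pair (w : seq nat) s : bool :=
  (count_mem s (take 2 w) == 2) || (count_mem s (drop (size w - 2) w) == 2).

Definition two_factor_criterion (w : seq nat) s t : bool :=
  [|| (2 < count_mem s w) && (2 < count_mem t w),
      (count_mem s w == 2) && border_pair w t
    | (count_mem t w == 2) && border_pair w s].

Lemma two_factor_criterionC (w : seq nat) s t :
  two_factor_criterion w s t = two_factor_criterion w t s.
Proof. by rewrite /two_factor_criterion andbC [_ || (_ && _)]orbC. Qed.

Section TwoLetterWord.

Variables (s t : nat) (w : seq nat).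
Hypotheses (neq_st : s != t) (w_st : all (fun x => (x == s) || (x == t)) w).

Let count_st_take k :
  count_mem s (take k w) + count_mem t (take k w) = minn k (size w).
Proof.
rewrite -size_take_min count_mem_two_letters //.
by apply/allP => x /mem_take; apply: (allP w_st).
Qed.

Let count_st_drop k :
  count_mem s (drop k w) + count_mem t (drop k w) = size w - k.
Proof.
rewrite -size_drop count_mem_two_letters //.
by apply/allP => x /mem_drop; apply: (allP w_st).
Qed.

Lemma splits_at_count k :
  splits_at w s t k -> 1 < count_mem s w /\ 1 < count_mem t w.
Proof.
case/andP=> s_pre t_suf.
by have := count_mem_take_drop w s k; have := count_mem_take_drop w t k; lia.
Qed.

Lemma splits_at_last_pairP : count_mem s w = 2 ->
  (exists k, splits_at w s t k) <-> count_mem t (drop (size w - 2) w) = 2.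
Proof.
move=> cs2; have := count_mem_take_drop w s (size w - 2).
have := count_st_drop (size w - 2); split=> [[k /andP[s_pre t_suf]] | t_last].
  have := count_mem_take_drop w s k; have := count_st_drop k.
  have : k <= size w - 2 by have := count_st_drop k; lia.
  by move=> /(count_mem_drop_anti w s); lia.
by exists (size w - 2); apply/andP; lia.
Qed.

Lemma splits_at_first_pairP : count_mem t w = 2 ->
  (exists k, splits_at w s t k) <-> count_mem s (take 2 w) = 2.
Proof.
move=> ct2; have := count_mem_take_drop w t 2.
have := count_st_take 2; split=> [[k /andP[s_pre t_suf]] | s_first].
  have := count_mem_take_drop w t k; have := count_st_take k.
  have : 2 <= k by have := count_st_take k; lia.
  by move=> /(count_mem_take_mono w t); have := count_mem_two_letters neq_st w_st; lia.
by exists 2; apply/andP; lia.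
Qed.

Lemma splits_at_three : 2 < count_mem s w -> 2 < count_mem t w ->
  splits_at w s t 3 || splits_at w t s 3.
Proof.
move=> cs ct; have := count_st_take 3; have := count_mem_two_letters neq_st w_st.
have := count_mem_take_drop w s 3; have := count_mem_take_drop w t 3; move=> *.
have [s_pre | t_pre] := leqP 2 (count_mem s (take 3 w)); apply/orP;
  [left | right]; apply/andP; split; lia.
Qed.

Lemma splits_at_criterion k : splits_at w s t k -> two_factor_criterion w s t.
Proof.
move=> Sk; have [cs ct] := splits_at_count Sk; rewrite /two_factor_criterion /border_pair.
have [cs2 | cs_ne] := eqVneq (count_mem s w) 2.
  by have -> := (splits_at_last_pairP cs2).1 (ex_intro _ k Sk); rewrite cs2 eqxx orbT.
have [ct2 | ct_ne] := eqVneq (count_mem t w) 2.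
  by have -> := (splits_at_first_pairP ct2).1 (ex_intro _ k Sk); rewrite ct2 eqxx !orbT.
by apply/orP; left; apply/andP; split; lia.
Qed.

End TwoLetterWord.

Lemma two_factor_criterion_splits (w : seq nat) s t :
  s != t -> all (fun x => (x == s) || (x == t)) w -> two_factor_criterion w s t ->
  (exists k, splits_at w s t k) \/ (exists k, splits_at w t s k).
Proof.
move=> neq_st w_st; have neq_ts : t != s by rewrite eq_sym.
have w_ts : all (fun x => (x == t) || (x == s)) w.
  by apply: sub_all w_st => x; rewrite orbC.
case/or3P=> [/andP[cs ct] | /andP[/eqP cs2 /orP[] /eqP pair]
            | /andP[/eqP ct2 /orP[] /eqP pair]].
- by have /orP[] := splits_at_three neq_st w_st cs ct; [left | right]; exists 3.
- by right; apply/(splits_at_first_pairP neq_ts w_ts cs2).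
- by left; apply/(splits_at_last_pairP neq_st w_st cs2).
- by left; apply/(splits_at_first_pairP neq_st w_st ct2).
- by right; apply/(splits_at_last_pairP neq_ts w_ts ct2).
Qed.

Lemma disjoint_factors2P (w : seq nat) :
  word12 w -> disjoint_factors2 w <-> two_factor_criterion w 1 2.
Proof.
move=> w12; have w21 : all (fun x => (x == 2) || (x == 1)) w.
  by apply: sub_all w12 => x; rewrite orbC.
rewrite disjoint_factors2_splitP.
split=> [[] [k Sk] | /two_factor_criterion_splits]; last exact.
  exact: (splits_at_criterion _ w12 Sk).
by rewrite two_factor_criterionC; apply: (splits_at_criterion _ w21 Sk).
Qed.

Lemma border_pairE (w : seq nat) s : 1 < size w ->
  border_pair w s =
    (nth 0 w 0 == s) && (nth 0 w 1 == s)
    || (nth 0 w (size w - 2) == s) && (nth 0 w (size w - 1) == s).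
Proof.
move=> n_gt1; rewrite /border_pair.
have pairE x y : (count_mem s [:: x; y] == 2) = (x == s) && (y == s).
  by rewrite /= addn0; case: (x == s); case: (y == s).
have -> : take 2 w = [:: nth 0 w 0; nth 0 w 1].
  by case: w n_gt1 => [|x [|y u]] //= _; rewrite take0.
rewrite (drop_nth 0 (_ : size w - 2 < size w)); last lia.
rewrite (drop_nth 0 (_ : (size w - 2).+1 < size w)); last lia.
rewrite drop_oversize; last lia.
by rewrite !pairE (_ : (size w - 2).+1 = size w - 1) //; lia.
Qed.

Lemma two_factor_criterion12E (w : seq nat) : word12 w ->
  two_factor_criterion w 1 2 =
    [|| (2 < count_mem 1 w) && (2 < size w - count_mem 1 w),
        (count_mem 1 w == 2) && border_pair w 2
      | (size w - count_mem 1 w == 2) && border_pair w 1].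
Proof. by move=> w12; rewrite -(count_mem_two_letters _ w12) // addKn. Qed.

Lemma natpowE m n : Nat.pow m n = m ^ n.
Proof. by elim: n => //= n ->; rewrite expnS. Qed.

Section WordArithmetic.

Variable ws : nat.

Lemma wmod_id x : x < 2 ^ ws -> wmod ws x = x.
Proof. by move=> lt_x; rewrite /wmod natpowE modn_small. Qed.

Hypothesis ws_gt1 : 1 < 2 ^ ws.

Lemma wmod_bool (b : bool) : wmod ws b = b.
Proof. by apply: wmod_id; case: b; rewrite ?expn_gt0. Qed.

Lemma eval_eq x y : eval_binop ws OEq x y = (x == y).
Proof. exact: wmod_bool. Qed.

Lemma eval_lt x y : eval_binop ws OLt x y = (x < y).
Proof. exact: wmod_bool. Qed.

Lemma eval_and (b c : bool) : eval_binop ws OAnd b c = b && c.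
Proof. by case: b; case: c; apply: wmod_id; rewrite ?expn_gt0. Qed.

Lemma eval_or (b c : bool) : eval_binop ws OOr b c = b || c.
Proof. by case: b; case: c; apply: wmod_id; rewrite ?expn_gt0. Qed.

End WordArithmetic.

Lemma eval_add ws x y : x + y < 2 ^ ws -> eval_binop ws OAdd x y = x + y.
Proof. exact: wmod_id. Qed.

Lemma eval_sub ws x y : y <= x -> x < 2 ^ ws -> eval_binop ws OSub x y = x - y.
Proof.
move=> le_yx lt_x; rewrite /eval_binop /wmod natpowE -addnBAC // modnDr modn_small //.
exact: leq_ltn_trans (leq_subr y x) lt_x.
Qed.

Definition runs ws (p : program) (c : conf) t (c' : conf) : Prop :=
  exists fuel, exec ws p fuel c = Some (t, c').

Definition halts_in ws (p : program) (c : conf) t (Q : conf -> Prop) : Prop :=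
  exists2 c', runs ws p c t c' & Q c'.

Lemma halts_in_step ws p c t Q :
  (if step ws p c is Some c1 then halts_in ws p c1 t Q else False) ->
  halts_in ws p c t.+1 Q.
Proof.
case E: (step ws p c) => [c1|] // [c' [fuel run] Qc'].
by exists c' => //; exists fuel.+1; rewrite /= E run.
Qed.

Lemma halts_in_stop ws p c Q : step ws p c = None -> Q c -> halts_in ws p c 0 Q.
Proof. by move=> E Qc; exists c => //; exists 1; rewrite /= E. Qed.

Arguments eval_binop : simpl never.
Arguments wmod : simpl never.

Ltac exec_step := apply: halts_in_step; rewrite /= /upd /=.
Ltac exec_stop := apply: halts_in_stop => //=.

(* Register 3 holds n and register 4 the number of ones; registers 1 and 2
   carry the arguments of an update, all others are scratch. *)
Definition encodes (w : seq nat) (c : conf) : Prop :=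
  [/\ word12 w, regs c 3 = size w, regs c 4 = count_mem 1 w & mem c =1 nth 0 w].

(* Computes two_factor_criterion w 1 2 in r0, with border_pair w 2 in r13 and
   border_pair w 1 in r14.  For n < 2 the addresses n - 2 and n - 1 wrap around
   and the border letters read are junk, but they are then masked by a, n - a < 2. *)
Definition query_prog : program :=
  [:: IConst 10 0; IConst 11 1; IConst 12 2; IBin OSub 5 3 4;
      ILoad 6 10; ILoad 7 11; IBin OSub 8 3 12; ILoad 8 8; IBin OSub 9 3 11; ILoad 9 9;
      IBin OEq 13 6 12; IBin OEq 14 7 12; IBin OAnd 13 13 14;
      IBin OEq 14 8 12; IBin OEq 15 9 12; IBin OAnd 14 14 15; IBin OOr 13 13 14;
      IBin OEq 14 6 11; IBin OEq 15 7 11; IBin OAnd 14 14 15;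
      IBin OEq 15 8 11; IBin OEq 16 9 11; IBin OAnd 15 15 16; IBin OOr 14 14 15;
      IBin OEq 15 4 12; IBin OAnd 15 15 13; IBin OEq 16 5 12; IBin OAnd 16 16 14;
      IBin OOr 15 15 16; IBin OLt 16 12 4; IBin OLt 17 12 5; IBin OAnd 16 16 17;
      IBin OOr 0 16 15; IHalt].

Lemma query_prog_spec ws w c : 2 < 2 ^ ws -> size w < 2 ^ ws -> encodes w c ->
  halts_in ws query_prog (Conf 0 (regs c) (mem c)) 33
    (fun c' => (regs c' 0 != 0 <-> disjoint_factors2 w) /\ encodes w c').
Proof.
move=> ws_gt2 n_lt [w12 r3 r4 mw]; have ws_gt1 := ltnW ws_gt2.
do 33 exec_step; exec_stop; split=> //.
have wmodE k : k <= 2 -> wmod ws k = k by move=> ?; apply: wmod_id; lia.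
have a_le_n : count_mem 1 w <= size w by rewrite -(count_mem_two_letters _ w12) ?leq_addr.
rewrite r3 r4 !wmodE // !mw (eval_sub a_le_n n_lt) !eval_eq // !eval_lt //.
do 3 rewrite ?eval_and // ?eval_or //.
rewrite eqb0 negbK disjoint_factors2P // two_factor_criterion12E //.
have [n_small | n_big] := leqP (size w) 1.
  have -> : (count_mem 1 w == 2) = false by apply/eqP; lia.
  have -> : (size w - count_mem 1 w == 2) = false by apply/eqP; lia.
  by have -> : (2 < count_mem 1 w) = false by apply/negbTE; rewrite -leqNgt; lia.
by rewrite !eval_sub ?(ltnW n_big) // -!border_pairE.
Qed.

Definition update_prog : program :=
  [:: ILoad 5 1; IConst 6 1; IBin OEq 7 5 6; IBin OEq 8 2 6;
      IBin OSub 4 4 7; IBin OAdd 4 4 8; IStore 1 2; IHalt].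

Lemma update_prog_spec ws w c i x :
  1 < 2 ^ ws -> size w < 2 ^ ws -> encodes w c -> i < size w -> is_symbol x ->
  halts_in ws update_prog (Conf 0 (upd (upd (regs c) 1 i) 2 x) (mem c)) 7
    (encodes (set_nth 0 w i x)).
Proof.
move=> ws_gt1 n_lt [w12 r3 r4 mw] lt_iw x12.
do 7 exec_step; exec_stop.
have size_set : size (set_nth 0 w i x) = size w by rewrite size_set_nth (maxn_idPr lt_iw).
split=> [| | | y] /=; first exact: all_set_nth.
- by rewrite size_set.
- have old_le : (nth 0 w i == 1) <= count_mem 1 w.
    by case: eqP => // <-; rewrite -has_count has_pred1 mem_nth.
  have new_count : count_mem 1 (set_nth 0 w i x) =
                    count_mem 1 w + (x == 1) - (nth 0 w i == 1).
    exact: count_set_nth_ltn.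
  have new_le : count_mem 1 (set_nth 0 w i x) <= size w by rewrite -size_set count_size.
  have old_size : count_mem 1 w <= size w := count_size _ _.
  by rewrite r4 wmod_id // !eval_eq // mw new_count eval_add ?eval_sub //; lia.
- by rewrite nth_set_nth /= mw.
Qed.

(* The first instruction copies r1 = n into r3, using r0 = 0. *)
Definition init_prog : program :=
  [:: IBin OAdd 3 1 0; IConst 6 1;
      IBin OLt 7 5 3; IJz 7 9; ILoad 8 5; IBin OEq 8 8 6; IBin OAdd 4 4 8;
      IBin OAdd 5 5 6; IJmp 2; IHalt].

Lemma init_prog_loop ws w : 1 < 2 ^ ws -> size w < 2 ^ ws -> word12 w ->
  forall k i r, i + k = size w -> r 3 = size w -> r 5 = i -> r 6 = 1 ->
  r 4 = count_mem 1 (take i w) ->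
  halts_in ws init_prog (Conf 2 r (nth 0 w)) (7 * k + 2) (encodes w).
Proof.
move=> ws_gt1 n_lt w12; elim=> [|k IHk] i r ik_n r3 r5 r6 r4.
  rewrite addn0 in ik_n; do 2 exec_step.
  rewrite r5 r3 eval_lt // ik_n ltnn /=; exec_stop.
  by split=> //=; rewrite r4 ik_n take_size.
have lt_in : i < size w by lia.
have -> : 7 * k.+1 + 2 = (7 * k + 2).+4.+3 by lia.
do 2 exec_step; rewrite r5 r3 eval_lt // lt_in /=.
do 5 exec_step; apply: (IHk i.+1) => /=; rewrite ?r3 ?r4 ?r5 ?r6 //.
- by rewrite addSnnS.
- by rewrite eval_add addn1 //; lia.
have count_le : count_mem 1 (take i w) <= i.
  by rewrite -{2}(size_takel (ltnW lt_in)) count_size.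
have count_step : count_mem 1 (take i.+1 w) = count_mem 1 (take i w) + (nth 0 w i == 1).
  by rewrite (take_nth 0 lt_in) -cats1 count_cat /= addn0.
by rewrite eval_eq // count_step eval_add //; case: (_ == 1); lia.
Qed.

Lemma init_prog_spec ws w : 1 < 2 ^ ws -> size w < 2 ^ ws -> word12 w ->
  halts_in ws init_prog (Conf 0 (regs (init_conf w)) (mem (init_conf w)))
    (7 * size w + 4) (encodes w).
Proof.
move=> ws_gt1 n_lt w12; have -> : 7 * size w + 4 = (7 * size w + 2).+2 by lia.
do 2 exec_step; apply: (init_prog_loop ws_gt1 n_lt w12 (i := 0)) => //=.
- by rewrite eval_add addn0.
- exact: wmod_id.
- by rewrite take0.
Qed.

Definition df2_ds : dyn_ds := DynDS init_prog update_prog query_prog.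

Lemma df2_ds_serves ws (ops : seq operation) : 2 < 2 ^ ws ->
  forall w c budget, size w < 2 ^ ws -> encodes w c ->
  all (valid_op (size w)) ops -> 33 * size ops <= budget ->
  serves ws df2_ds ops w c budget.
Proof.
move=> ws_gt2; have ws_gt1 := ltnW ws_gt2.
elim: ops => //= o ops IHops w c budget n_lt enc /andP[valid_o valid_ops] le_budget.
case: o valid_o => [i x /andP[lt_iw x12] | _] /=.
  have [c' [fuel run] enc'] := update_prog_spec ws_gt1 n_lt enc lt_iw x12.
  have size_set : size (set_nth 0 w i x) = size w.
    by rewrite size_set_nth (maxn_idPr lt_iw).
  exists 7, c'; split; [by exists fuel | lia | apply: IHops; rewrite ?size_set //; lia].
have [c' [fuel run] [answer enc']] := query_prog_spec ws_gt2 n_lt enc.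
by exists 33, c'; split; [exists fuel | lia | | apply: IHops => //; lia].
Qed.

Lemma word_size_bounds ws n : 2 * (trunc_log 2 n).+1 <= ws -> 2 < 2 ^ ws /\ n < 2 ^ ws.
Proof.
move=> ws_large; split.
  by apply: (@leq_trans (2 ^ 2)); rewrite // leq_pexp2l //; lia.
apply: leq_trans (trunc_log_ltn n (isT : 1 < 2)) _.
by rewrite leq_pexp2l //; lia.
Qed.

Theorem lemma33 :
  exists (D : dyn_ds) (C c : nat),
    forall (ws : nat) (w : seq nat) (ops : seq operation),
      word12 w ->
      c * (trunc_log 2 (size w)).+1 <= ws ->
      all (valid_op (size w)) ops ->
      runs_within ws D w ops (C * (size w + size ops + 1)).
Proof.
exists df2_ds, 33, 2 => ws w ops w12 /word_size_bounds[ws_gt2 n_lt] valid_ops.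
have [c [fuel run] enc] := init_prog_spec (ltnW ws_gt2) n_lt w12.
exists (7 * size w + 4), c; split; [by exists fuel | lia |].
by apply: df2_ds_serves => //; lia.
Qed.
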